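(* Let $a\in\mathbb{N}$ and $b\neq d\in\mathbb{Z}$ with $a\mid\mathrm{lcm}(b,d)$. Then $\omega(G_{a,b,a,d})=\infty$, i.e. $G_{a,b,a,d}$ contains cliques of every finite size.
   Context: $\mathbb{N}=\{1,2,\dots\}$; convention $\mathrm{lcm}(b,0)=0$. For $a,c\in\mathbb{N}$, $b,d\in\mathbb{Z}$, $R_{a,b,c,d} := \left\{ \frac{an+b}{cn+d} : n \in \mathbb{N} \right\} \cap (\mathbb{Q}_{>0}\setminus\{1\})$; $G_{a,b,c,d}$ is the graph with vertex set $\mathbb{N}$ and edge set $\{\{m,n\}: m/n\in R_{a,b,c,d}\}$. $\omega$ denotes clique number. *)

From mathcomp Require Import all_boot all_order all_algebra.
Set Implicit Arguments. Unset Strict Implicit. Unset Printing Implicit Defensive.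
Import Order.TTheory GRing.Theory Num.Theory.
Local Open Scope ring_scope.

(* Division by zero in rat yields 0, which is excluded by q > 0, so
   indices n with c n + d = 0 contribute nothing (the quotient is undefined). *)
Definition inR (a : nat) (b : int) (c : nat) (d : int) (q : rat) : Prop :=
  exists n : nat, (0 < n)%N /\
    (c%:Z * n%:Z + d != 0) /\
    q = (a%:Z * n%:Z + b)%:~R / (c%:Z * n%:Z + d)%:~R /\
    0 < q /\ q != 1.

Definition adjG (a : nat) (b : int) (c : nat) (d : int) (m n : nat) : Prop :=
  inR a b c d (m%:Q / n%:Q) \/ inR a b c d (n%:Q / m%:Q).

Definition is_cliqueG (a : nat) (b : int) (c : nat) (d : int) (S : seq nat) : Prop :=
  uniq S /\ (forall m, m \in S -> (0 < m)%N) /\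
  (forall m n, m \in S -> n \in S -> m != n -> adjG a b c d m n).

(* Split a = U V with U, V coprime, U | d and V | b, which a | lcm(b, d) allows;
   by symmetry d < b.  If x = r (y - x) with U | r, V | r + 1 and r > |d|, then
   y / x = (r + 1) / r = (a n + b) / (a n + d) for the positive integer
   n = (r b - (r + 1) d) / a, so x and y are adjacent.  Sets in which every pair
   has this form are grown one element at a time: after scaling so that V divides
   every element s, the set is translated by a multiple L of U V \prod s, which
   preserves its pairs, and z = L - Q is added for a suitable Q coprime to V,
   with L chosen by the Chinese remainder theorem so that each difference s + Q
   divides z with z / (s + Q) divisible by U and congruent to -1 modulo V. *)

From mathcomp Require Import all_boot all_order all_algebra ring zify.
Import Order.TTheory GRing.Theory Num.Theory.

Set Implicit Arguments.
Unset Strict Implicit.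
Unset Printing Implicit Defensive.

Lemma dvdn_lcm_split (a p q : nat) : 0 < a -> a %| lcmn p q ->
  exists U V, [/\ coprime U V, U * V = a, U %| q & V %| p].
Proof.
move=> a_gt0 a_lcm.
have [->|q_gt0] := posnP q.
  by exists a, 1; rewrite coprimen1 muln1 dvdn0 dvd1n.
have [->|p_gt0] := posnP p.
  by exists 1, a; rewrite coprime1n mul1n dvd1n dvdn0.
pose pi := [pred l : nat | a`_l %| q].
exists a`_pi, a`_pi^'; split; [exact: coprime_partC | exact: partnC | |].
- apply/dvdn_partP; first exact: part_gt0.
  move=> l; rewrite pi_of_part // inE => /andP[_ l_pi].
  by rewrite partn_part // => x; rewrite inE => /eqP ->.
- apply/dvdn_partP; first exact: part_gt0.
  move=> l; rewrite pi_of_part // inE => /andP[l_a l_pi'].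
  rewrite partn_part; last by move=> x; rewrite inE => /eqP ->.
  have l_prime : prime l by move: l_a; rewrite mem_primes => /andP[].
  have : a`_l %| lcmn p q by apply: dvdn_trans a_lcm; apply: dvdn_part.
  move: l_pi'; rewrite !inE /= !p_part !pfactor_dvdn ?lcmn_gt0 ?p_gt0 ?q_gt0 //.
  by rewrite logn_lcm // leq_max => /negbTE ->; rewrite orbF.
Qed.

Lemma coprime_prod_seq (I : eqType) (r : seq I) (F : I -> nat) n :
  {in r, forall i, coprime (F i) n} -> coprime (\prod_(i <- r) F i) n.
Proof.
move=> coF; rewrite big_seq; elim/big_ind: _ => // [|x y]; first exact: coprime1n.
by rewrite coprimeMl => -> ->.
Qed.

Lemma dvdn_prod_seq (I : eqType) (r : seq I) (F : I -> nat) i :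
  i \in r -> F i %| \prod_(j <- r) F j.
Proof. by move=> ir; rewrite (big_rem _ ir) dvdn_mulr. Qed.

Lemma exists_large_inverse (A M C : nat) : 0 < M -> coprime A M ->
  exists2 c, C < c & M %| A * c + 1.
Proof.
move=> M_gt0 coAM.
have := chinese_modl coAM 0 M.-1; have := chinese_modr coAM 0 M.-1.
move: (chinese A M 0 M.-1) => x M_x; rewrite mod0n => /eqP A_x.
have /dvdnP[c0 x_eq] : A %| x by [].
exists (c0 + M * C.+1); first by rewrite (leq_trans _ (leq_addl _ _)) // leq_pmull.
rewrite mulnDr addnAC (mulnC A) -x_eq dvdn_add //; last by rewrite mulnCA dvdn_mulr.
by rewrite /dvdn -modnDml M_x modnDml addn1 prednK // modnn.
Qed.

Definition succ_ratio (U V C x y : nat) : Prop :=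
  exists r, [/\ x = r * (y - x), U %| r, V %| r.+1 & C <= r].

Definition succ_ratio_set (U V C : nat) (S : seq nat) : Prop :=
  [/\ uniq S, {in S, forall x, 0 < x} &
      {in S &, forall x y, x < y -> succ_ratio U V C x y}].

Section SuccRatio.

Variables U V C : nat.

Lemma succ_ratio_dvd x y : succ_ratio U V C x y -> y - x %| x.
Proof. by case=> r [x_eq _ _ _]; rewrite {2}x_eq dvdn_mull. Qed.

Lemma succ_ratio_scale m x y :
  succ_ratio U V C x y -> succ_ratio U V C (m * x) (m * y).
Proof. by case=> r [x_eq Ur Vr Cr]; exists r; rewrite -mulnBr mulnCA -x_eq. Qed.

Lemma succ_ratio_translate L x y : U * V * (y - x) %| L ->
  succ_ratio U V C x y -> succ_ratio U V C (x + L) (y + L).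
Proof.
case/dvdnP=> j ->{L} [r [x_eq Ur Vr Cr]].
exists (r + j * U * V); rewrite subnDr; split.
- by rewrite {1}x_eq; ring.
- by rewrite dvdn_add // mulnAC dvdn_mull.
- by rewrite -addSn dvdn_add // dvdn_mull.
- exact: leq_trans Cr (leq_addr _ _).
Qed.

Lemma succ_ratio_below s Q k : 0 < Q -> U %| Q -> coprime V Q -> V %| s ->
  V %| (k * (s + Q)).+1 * Q -> C <= k ->
  succ_ratio U V C (k * (s + Q) * Q) (s + (k * (s + Q)).+1 * Q).
Proof.
move=> Q_gt0 UQ coVQ Vs VL Ck; exists (k * Q).
have -> : s + (k * (s + Q)).+1 * Q - k * (s + Q) * Q = s + Q.
  by rewrite mulSn addnA addnK.
split; [ring | by rewrite dvdn_mull | | exact: leq_trans Ck (leq_pmulr _ Q_gt0)].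
have coVsQ : coprime V (s + Q) by rewrite /coprime -(divnK Vs) gcdnMDl.
rewrite -(Gauss_dvdl _ coVsQ).
have -> : (k * Q).+1 * (s + Q) = s + (k * (s + Q)).+1 * Q by ring.
by rewrite dvdn_add.
Qed.

Lemma succ_ratio_set_scale m S : 0 < m ->
  succ_ratio_set U V C S -> succ_ratio_set U V C [seq m * x | x <- S].
Proof.
move=> m_gt0 [uniqS posS ratS]; split.
- by rewrite map_inj_uniq // => x y /eqP; rewrite eqn_pmul2l // => /eqP.
- by move=> _ /mapP[x xS ->]; rewrite muln_gt0 m_gt0 posS.
- move=> _ _ /mapP[x xS ->] /mapP[y yS ->]; rewrite ltn_pmul2l // => lt_xy.
  exact: succ_ratio_scale (ratS x y xS yS lt_xy).
Qed.

Lemma succ_ratio_set_cons z L S : succ_ratio_set U V C S -> 0 < z ->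
  {in S, forall s, z < s + L /\ succ_ratio U V C z (s + L)} ->
  {in S &, forall x y, x < y -> U * V * (y - x) %| L} ->
  succ_ratio_set U V C (z :: [seq s + L | s <- S]).
Proof.
case=> uniqS posS ratS z_gt0 zS dvdL; split.
- rewrite /= map_inj_uniq ?uniqS ?andbT; last exact: addIn.
  by apply/mapP=> -[s sS z_eq]; have := (zS s sS).1; rewrite -z_eq ltnn.
- by move=> x; rewrite inE => /predU1P[->|/mapP[s sS ->]] //; apply: ltn_addr (posS s sS).
- move=> x y; rewrite !inE => /predU1P[->|/mapP[s1 s1S ->]] /predU1P[->|/mapP[s2 s2S ->]].
  + by rewrite ltnn.
  + by move=> _; apply: (zS s2 s2S).2.
  + by rewrite ltnNge (ltnW (zS s1 s1S).1).
  + rewrite ltn_add2r => lt12.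
    exact: succ_ratio_translate (dvdL s1 s2 s1S s2S lt12) (ratS s1 s2 s1S s2S lt12).
Qed.

Hypotheses (U_gt0 : 0 < U) (V_gt0 : 0 < V) (coUV : coprime U V).

Lemma succ_ratio_set_extend S : succ_ratio_set U V C S -> {in S, forall x, V %| x} ->
  exists S', size S' = (size S).+1 /\ succ_ratio_set U V C S'.
Proof.
move=> setS VS; have [_ posS ratS] := setS.
pose Pi := \prod_(s <- S) s.
have Pi_gt0 : 0 < Pi by rewrite /Pi big_seq prodn_cond_gt0.
(* Q keeps only the part of Pi coprime to V, so that each s + Q is coprime to V
   while U * V * Pi still divides M * Q below. *)
pose Q := U * Pi`_\pi(V)^'.
have Q_gt0 : 0 < Q by rewrite muln_gt0 U_gt0 part_gt0.
have coVQ : coprime V Q.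
  rewrite coprimeMr coprime_sym coUV -{1}(part_pnat_id (pnat_pi V_gt0)).
  exact: coprime_partC.
pose P := \prod_(s <- S) (s + Q).
have P_gt0 : 0 < P by rewrite prodn_gt0 // => s; rewrite addn_gt0 Q_gt0 orbT.
have coPV : coprime P V.
  apply: coprime_prod_seq => s sS.
  by rewrite coprime_sym /coprime -(divnK (VS s sS)) gcdnMDl.
pose M := V * Pi`_\pi(V).
have M_gt0 : 0 < M by rewrite muln_gt0 V_gt0 part_gt0.
have coPM : coprime P M.
  rewrite coprimeMr coPV coprime_sym (pnat_coprime (part_pnat _ _)) //.
  by rewrite -coprime_pi' // coprime_sym.
have [c Cc Mc] := @exists_large_inverse P M C M_gt0 coPM.
pose L := (P * c).+1 * Q.
have dvdL : U * V * Pi %| L.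
  have -> : U * V * Pi = M * Q by rewrite /M /Q -{1}(partnC \pi(V) Pi_gt0); ring.
  by rewrite dvdn_mul // -addn1.
exists (P * c * Q :: [seq s + L | s <- S]); split; first by rewrite /= size_map.
apply: succ_ratio_set_cons => //.
- by rewrite muln_gt0 Q_gt0 andbT muln_gt0 P_gt0 (leq_ltn_trans _ Cc).
- move=> s sS; have [k P_eq] := dvdnP (dvdn_prod_seq (fun s => s + Q) sS).
  split; first by rewrite /L mulSn; lia.
  have k_gt0 : 0 < k by move: P_gt0; rewrite /P P_eq muln_gt0 => /andP[].
  have VL : V %| L by apply: dvdn_trans dvdL; rewrite -mulnA dvdn_mull ?dvdn_mulr.
  have Pc_eq : P * c = c * k * (s + Q) by rewrite /P P_eq; ring.
  rewrite /L Pc_eq in VL *.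
  apply: succ_ratio_below => //; [exact: dvdn_mulr | exact: VS |].
  by rewrite (leq_trans (ltnW Cc)) // leq_pmulr.
- move=> x y xS yS lt_xy; apply: dvdn_trans dvdL.
  rewrite dvdn_pmul2l ?muln_gt0 ?U_gt0 //.
  exact: dvdn_trans (succ_ratio_dvd (ratS x y xS yS lt_xy)) (dvdn_prod_seq id xS).
Qed.

Lemma succ_ratio_set_exists k : exists S, size S = k /\ succ_ratio_set U V C S.
Proof.
elim: k => [|k [S [<- setS]]]; first by exists [::].
have [|S' [sizeS' setS']] := succ_ratio_set_extend (succ_ratio_set_scale V_gt0 setS).
  by move=> _ /mapP[x _ ->]; apply: dvdn_mulr.
by exists S'; rewrite sizeS' size_map.
Qed.

End SuccRatio.

Local Open Scope ring_scope.

Lemma inR_inv (a : nat) (b d : int) (q : rat) : inR a b a d q -> inR a d a b q^-1.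
Proof.
case=> n [n_gt0 [_ [q_eq [q_gt0 q_neq1]]]]; exists n; do !split=> //.
- by apply: contraTneq q_gt0 => num_eq0; rewrite q_eq num_eq0 mul0r ltxx.
- by rewrite q_eq invf_div.
- by rewrite invr_gt0.
- by rewrite invr_eq1.
Qed.

Lemma adjG_sym (a : nat) (b d : int) m n : adjG a b a d m n -> adjG a d a b m n.
Proof. by case=> /inR_inv; rewrite invf_div; [right | left]. Qed.

Lemma is_cliqueG_sym (a : nat) (b d : int) S : is_cliqueG a b a d S -> is_cliqueG a d a b S.
Proof.
case=> uniqS [posS adjS]; split=> //; split=> // m n mS nS mn.
exact/adjG_sym/adjS.
Qed.

Section Edge.

Variables (a U V : nat) (b d : int).
Hypotheses (a_gt0 : (0 < a)%N) (UV_eq : (U * V)%N = a).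
Hypotheses (U_d : (U %| `|d|)%N) (V_b : (V %| `|b|)%N) (lt_db : d < b).

Lemma dvdz_succ_ratio r : (U %| r)%N -> (V %| r.+1)%N ->
  (a%:Z %| r%:Z * b - (r%:Z + 1) * d)%Z.
Proof.
move=> /dvdnP[r1 r_eq] /dvdnP[r2 r1_eq].
have /dvdzP[b1 ->] : (V%:Z %| b)%Z by [].
have /dvdzP[d1 ->] : (U%:Z %| d)%Z by [].
have -> : r%:Z + 1 = r2%:Z * V%:Z by rewrite -PoszM -r1_eq; lia.
apply/dvdzP; exists (r1%:Z * b1 - r2%:Z * d1).
by rewrite -UV_eq r_eq !PoszM; ring.
Qed.

Lemma succ_ratio_index r : (U %| r)%N -> (V %| r.+1)%N -> (`|d| < r)%N ->
  exists2 n : nat, (0 < n)%N & a%:Z * n%:Z + d = r%:Z * (b - d).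
Proof.
move=> U_r V_r d_lt_r; have /dvdzP[T T_eq] := dvdz_succ_ratio U_r V_r.
have aT_eq : a%:Z * T = r%:Z * (b - d) - d by rewrite mulrC -T_eq; ring.
have T_gt0 : 0 < T.
  have r_le : r%:Z <= r%:Z * (b - d) by rewrite ler_peMr //; lia.
  have d_lt : d < r%:Z by rewrite (le_lt_trans (ler_norm d)) // -abszE ltz_nat.
  by rewrite -(pmulr_rgt0 T (_ : 0 < a%:Z)) ?ltz_nat // aT_eq; lia.
exists `|T|%N; first by rewrite -ltz_nat gez0_abs ?ltW.
by rewrite gez0_abs ?ltW // aT_eq; ring.
Qed.

Lemma inR_succ_ratio C x y : (`|d| < C)%N -> (0 < x)%N -> (x < y)%N ->
  succ_ratio U V C x y -> inR a b a d (y%:Q / x%:Q).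
Proof.
move=> d_lt_C x_gt0 lt_xy [r [x_eq U_r V_r C_r]].
have [n n_gt0 n_eq] := succ_ratio_index U_r V_r (leq_trans d_lt_C C_r).
have r_gt0 : (0 < r)%N by apply: leq_trans C_r; apply: leq_ltn_trans d_lt_C.
have y_eq : y = (r.+1 * (y - x))%N by rewrite mulSn -x_eq subnK // ltnW.
have den_gt0 : 0 < a%:Z * n%:Z + d.
  by rewrite n_eq pmulr_rgt0 ?subr_gt0 // ltz_nat.
exists n; split=> //; split; first by rewrite gt_eqF.
have x_neq0 : x%:Q != 0 by rewrite intr_eq0 -lt0n.
split; last split.
- have den_neq0 : (a%:Z * n%:Z + d)%:~R != 0 :> rat by rewrite intr_eq0 gt_eqF.
  apply/eqP; rewrite eqr_div // -!intrM; apply/eqP; congr (_%:~R).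
  have -> : a%:Z * n%:Z + b = a%:Z * n%:Z + d + (b - d) by ring.
  by rewrite n_eq {1}y_eq {2}x_eq !PoszM; ring.
- by rewrite divr_gt0 // ltr0z ltz_nat // (ltn_trans x_gt0).
- apply: contraTneq lt_xy => /(congr1 ( *%R^~ x%:Q)); rewrite divfK // mul1r.
  by move/intr_inj => [->]; rewrite ltnn.
Qed.

Lemma is_cliqueG_succ_ratio_set C S : (`|d| < C)%N ->
  succ_ratio_set U V C S -> is_cliqueG a b a d S.
Proof.
move=> d_lt_C [uniqS posS ratS]; split=> //; split=> // m n mS nS.
case: (ltngtP m n) => // [lt_mn | lt_nm] _.
- right; exact: inR_succ_ratio d_lt_C (posS m mS) lt_mn (ratS m n mS nS lt_mn).
- left; exact: inR_succ_ratio d_lt_C (posS n nS) lt_nm (ratS n m nS mS lt_nm).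
Qed.

End Edge.

Unset Implicit Arguments.

Theorem theorem3p2 (a : nat) (b d : int) :
  (0 < a)%N -> b != d -> (a%:Z %| lcmz b d)%Z ->
  forall k : nat, exists S : seq nat, size S = k /\ is_cliqueG a b a d S.
Proof.
move=> a_gt0 neq_bd dvd_a k.
wlog lt_db : b d neq_bd dvd_a / d < b.
  move=> lt_case; case: (ltgtP b d) => [lt_bd|lt_db|eq_bd]; last first.
  - by rewrite eq_bd eqxx in neq_bd.
  - exact: lt_case.
  have := lt_case d b; rewrite eq_sym lcmzC => /(_ neq_bd dvd_a lt_bd) [S [sizeS cliqueS]].
  by exists S; split; last apply: is_cliqueG_sym.
have [U [V [coUV UV_eq U_d V_b]]] := dvdn_lcm_split a_gt0 dvd_a.
have /andP[U_gt0 V_gt0] : (0 < U)%N && (0 < V)%N by rewrite -muln_gt0 UV_eq.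
have [S [sizeS setS]] := succ_ratio_set_exists `|d|.+1 U_gt0 V_gt0 coUV k.
by exists S; split; last exact: is_cliqueG_succ_ratio_set setS.
Qed.
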